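(* The pseudovariety $\mathbf{RZ}\mathbin{ⓜ}\mathbf{LNB}$, where $\mathbf{LNB}=\mathbf{Sl}\vee\mathbf{LZ}$, is generated by $L_2^{\mathsf{bar}}$.
   Context: A pseudovariety is a class of finite semigroups closed under finite direct products, subsemigroups and homomorphic images. $\mathbf{Sl}$, $\mathbf{LZ}$, $\mathbf{RZ}$ are the pseudovarieties of semilattices, left zero semigroups ($xy=x$) and right zero semigroups ($xy=y$). The Mal'cev product $\mathbf{V}\mathbin{ⓜ}\mathbf{W}$ is the pseudovariety generated by all finite semigroups $S$ admitting a homomorphism $\varphi\colon S\to T$ with $T\in\mathbf{W}$ and $e\varphi^{-1}\in\mathbf{V}$ for every idempotent $e\in T$. $L_2=\{e,f\}$ is the left zero semigroup of order two and $L_2^{\mathsf{bar}}=\{e,f,\bar e,\bar f,\bar I\}$ is the semigroup with multiplication: $xy=y$ for $y\in\{\bar e,\bar f,\bar I\}$; $ee=ef=e$; $fe=ff=f$; $\bar ee=\bar ef=\bar e$; $\bar fe=\bar ff=\bar f$; $\bar Ie=\bar e$; $\bar If=\bar f$. *)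

From mathcomp Require Import all_boot.
Set Implicit Arguments. Unset Strict Implicit. Unset Printing Implicit Defensive.

Record finSemigroup := FinSemigroup {
  carrier :> finType;
  sop : carrier -> carrier -> carrier;
  sopA : associative sop;
  carrier_nonempty : 0 < #|carrier|
}.

Definition is_hom (S T : finSemigroup) (f : S -> T) : Prop :=
  forall x y, f (sop x y) = sop (f x) (f y).

Definition idempotent_el (T : finSemigroup) (e : T) : Prop := sop e e = e.

Definition fsclass := finSemigroup -> Prop.

Section Prod.
Variables S T : finSemigroup.
Definition prod_op (x y : S * T) : S * T := (sop x.1 y.1, sop x.2 y.2).
Lemma prod_opA : associative prod_op.
Proof. by move=> [a b] [c d] [g h]; rewrite /prod_op /= !sopA. Qed.
Lemma prod_nonempty : 0 < #|{: S * T}|.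
Proof. by rewrite card_prod muln_gt0 !carrier_nonempty. Qed.
Definition prod_sg : finSemigroup := FinSemigroup prod_opA prod_nonempty.
End Prod.

Definition unit_op (x y : unit) : unit := tt.
Lemma unit_opA : associative unit_op. Proof. by []. Qed.
Lemma unit_nonempty : 0 < #|{: unit}|. Proof. by rewrite card_unit. Qed.
Definition trivial_sg : finSemigroup := FinSemigroup unit_opA unit_nonempty.

(* Pseudovariety: closed under finite direct products, subsemigroups
   (= injective homomorphisms into a member) and homomorphic images
   (= surjective homomorphisms from a member). *)
Definition pseudovariety (V : fsclass) : Prop :=
  [/\ V trivial_sg,
      (forall S T : finSemigroup, V S -> V T -> V (prod_sg S T)),
      (forall (S T : finSemigroup) (f : S -> T),
          is_hom f -> injective f -> V T -> V S) &
      (forall (S T : finSemigroup) (f : S -> T),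
          is_hom f -> (forall y : T, exists x, f x = y) -> V S -> V T)].

Definition pv_gen (C : fsclass) : fsclass :=
  fun S => forall V : fsclass, pseudovariety V -> (forall T, C T -> V T) -> V S.

Definition pv_join (V W : fsclass) : fsclass := pv_gen (fun S => V S \/ W S).

Definition Sl : fsclass := fun S =>
  (forall x y : S, sop x y = sop y x) /\ (forall x : S, sop x x = x).
Definition LZ : fsclass := fun S => forall x y : S, sop x y = x.
Definition RZ : fsclass := fun S => forall x y : S, sop x y = y.

Definition LNB : fsclass := pv_join Sl LZ.

(* "e phi^-1 belongs to V": some member U of V is isomorphic to the
   subsemigroup e phi^-1 of S, via an injective homomorphism U -> S whose
   image is exactly the preimage of e. *)
Definition preimage_in (V : fsclass) (S T : finSemigroup) (phi : S -> T) (e : T)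
  : Prop :=
  exists U : finSemigroup, V U /\
    exists iota : U -> S, [/\ is_hom iota, injective iota &
      forall x : S, phi x = e <-> exists u, iota u = x].

Definition malcev (V W : fsclass) : fsclass :=
  pv_gen (fun S => exists T : finSemigroup, W T /\
    exists phi : S -> T, is_hom phi /\
      forall e : T, idempotent_el e -> (exists x, phi x = e) ->
        preimage_in V phi e).

(* L_2^bar on 'I_5: 0 = e, 1 = f, 2 = ebar, 3 = fbar, 4 = Ibar. *)
Definition l2bar_op (x y : 'I_5) : 'I_5 :=
  if 2 <= y then y
  else if val x == 4 then inord (y + 2)
  else x.

Lemma l2bar_opA : associative l2bar_op.
Proof.
by do 3!case=> [[|[|[|[|[|?]]]]] ?] //; apply/val_inj;
   rewrite /l2bar_op /= ?inordK.
Qed.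

Lemma l2bar_nonempty : 0 < #|{: 'I_5}|. Proof. by rewrite card_ord. Qed.

Definition L2bar : finSemigroup := FinSemigroup l2bar_opA l2bar_nonempty.

Definition pv_gen1 (X : finSemigroup) : fsclass := pv_gen (fun T => T = X).

From mathcomp Require Import all_boot boolp.
Set Implicit Arguments. Unset Strict Implicit. Unset Printing Implicit Defensive.

(* Let phi : S -> T have right zero fibres over a left normal band T.  In T the
   product of a word depends only on its first letter and its content, so in S
   the products x, y of two such words satisfy x y = y, and S is a band.  Write a
   word as P ++ l :: U with l :: U a suffix of full content; then its product x
   and the product w of l :: U satisfy x w = x and w x = w.  Hence two words with
   the same first letter and content and the same product w have equal products:
   x = x w = x w y = x y = y.  Recursing on U, the product of a word is determined
   by data that are all read off from its values in L2bar under suitable maps of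
   the letters (sending l to ebar, fbar or Ibar), so S is a quotient of a
   subsemigroup of a power of L2bar.  Conversely, L2bar maps onto L2 with a zero
   adjoined, a member of LNB, with right zero fibres. *)

(* The nonempty word [x :: s] is represented by the pair [x], [s]. *)
Definition wprod (S : finSemigroup) (x : S) (s : seq S) : S := foldl (@sop S) x s.

Section WordProducts.
Variable S : finSemigroup.
Implicit Types (x y : S) (s t : seq S).

Lemma wprod_sopl x y s : wprod (sop x y) s = sop x (wprod y s).
Proof. by elim: s y => [|z s IH] y //=; rewrite /wprod /= -sopA -IH. Qed.

Lemma wprod_consl x y s : wprod x (y :: s) = wprod (sop x y) s.
Proof. by []. Qed.

Lemma wprod_cons x y s : wprod x (y :: s) = sop x (wprod y s).
Proof. exact: wprod_sopl. Qed.

Lemma wprod_rcons x s y : wprod x (rcons s y) = sop (wprod x s) y.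
Proof. by rewrite /wprod foldl_rcons. Qed.

Lemma wprod_cat x s y t : wprod x (s ++ y :: t) = sop (wprod x s) (wprod y t).
Proof. by rewrite /wprod foldl_cat -/(wprod _ (y :: t)) wprod_cons. Qed.

End WordProducts.

Lemma wprod_hom (S T : finSemigroup) (f : S -> T) :
  is_hom f -> forall (x : S) s, f (wprod x s) = wprod (f x) (map f s).
Proof.
move=> homf x s; elim: s x => [|y s IH] x //.
by rewrite map_cons !wprod_cons homf IH.
Qed.

Lemma split_last (T : eqType) (z : T) s : z \in s -> exists P U, s = P ++ z :: U /\ z \notin U.
Proof.
elim: s => [//|y s IH]; case zs: (z \in s) => zys.
  by have [P [U [-> zU]]] := IH zs; exists (y :: P), U.
by move: zys; rewrite inE zs orbF => /eqP <-; exists [::], s; rewrite zs.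
Qed.

Lemma split_full_suffix (T : eqType) (x : T) s :
  exists P l U, [/\ x :: s = P ++ l :: U, l \notin U & {subset x :: s <= l :: U}].
Proof.
elim: s x => [|y s IH] x; first by exists [::], x, [::]; split=> // z; rewrite inE.
case xys: (x \in y :: s); last by exists [::], x, (y :: s); split; rewrite ?xys.
have [P [l [U [eys lU ysU]]]] := IH y.
exists (x :: P), l, U; split=> //; first by rewrite eys.
by move=> z; rewrite inE => /predU1P[-> | ]; apply: ysU.
Qed.

Lemma pv_gen_pseudovariety (C : fsclass) : pseudovariety (pv_gen C).
Proof.
split.
- by move=> V [].
- move=> S T CS CT V pvV CV; case: (pvV) => _ prodV _ _.
  exact: prodV (CS V pvV CV) (CT V pvV CV).
- move=> S T f homf injf CT V pvV CV; case: (pvV) => _ _ subV _.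
  exact: subV homf injf (CT V pvV CV).
- move=> S T f homf surf CS V pvV CV; case: (pvV) => _ _ _ quoV.
  exact: quoV homf surf (CS V pvV CV).
Qed.

Lemma pv_gen_sub (C : fsclass) (S : finSemigroup) : C S -> pv_gen C S.
Proof. by move=> CS V _; apply. Qed.

Lemma fst_hom (S T : finSemigroup) : is_hom (@fst S T : prod_sg S T -> S).
Proof. by []. Qed.

Lemma snd_hom (S T : finSemigroup) : is_hom (@snd S T : prod_sg S T -> T).
Proof. by []. Qed.

Section Power.
Variables (X : finSemigroup) (I : finType).

Definition fpow_op (f g : {ffun I -> X}) : {ffun I -> X} := [ffun i => sop (f i) (g i)].

Lemma fpow_opA : associative fpow_op.
Proof. by move=> f g h; apply/ffunP => i; rewrite !ffunE sopA. Qed.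

Lemma fpow_nonempty : 0 < #|{: {ffun I -> X}}|.
Proof. by rewrite card_ffun expn_gt0 carrier_nonempty. Qed.

Definition fpow_sg : finSemigroup := FinSemigroup fpow_opA fpow_nonempty.

Lemma fpow_sopE (f g : fpow_sg) i : sop f g i = sop (f i) (g i).
Proof. exact: ffunE. Qed.

Lemma fpow_app_hom (i : I) : is_hom (fun f : fpow_sg => f i).
Proof. by move=> f g; rewrite fpow_sopE. Qed.

End Power.

Section PowerClosure.
Variables (V : fsclass) (X : finSemigroup).
Hypotheses (pvV : pseudovariety V) (VX : V X).

Lemma pseudovariety_fpow_ord n : V (fpow_sg X 'I_n).
Proof.
case: pvV => Vtrivial prodV subV _; elim: n => [|n IH].
  apply: (subV _ trivial_sg (fun _ => tt)) => // f g _.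
  by apply/ffunP => -[].
pose split_head (f : fpow_sg X 'I_n.+1) : prod_sg X (fpow_sg X 'I_n) :=
  (f ord0, [ffun i => f (lift ord0 i)]).
apply: (subV _ _ split_head); last exact: prodV.
  by move=> f g; congr pair; rewrite ?fpow_sopE //; apply/ffunP => i; rewrite !(ffunE, fpow_sopE).
move=> f g [f0 fS]; apply/ffunP => i.
case: (unliftP ord0 i) => [j ->|->] //.
by have /ffunP/(_ j) := fS; rewrite !ffunE.
Qed.

Lemma pseudovariety_fpow (I : finType) : V (fpow_sg X I).
Proof.
case: pvV => _ _ subV _.
pose reindex (f : fpow_sg X I) : fpow_sg X 'I_#|I| := [ffun i => f (enum_val i)].
apply: (subV _ _ reindex); last exact: pseudovariety_fpow_ord.
  by move=> f g; apply/ffunP => i; rewrite !(ffunE, fpow_sopE).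
move=> f g /ffunP efg; apply/ffunP => x.
by have := efg (enum_rank x); rewrite !ffunE enum_rankK.
Qed.

End PowerClosure.

Section Generated.
Variables (M : finSemigroup) (A : finType) (h : A -> M).
Hypothesis A_nonempty : 0 < #|A|.

Definition generated (m : M) : bool := `[< exists a u, wprod (h a) (map h u) = m >].

Lemma generatedP m : reflect (exists a u, wprod (h a) (map h u) = m) (generated m).
Proof. exact: asboolP. Qed.

Lemma generated_sop m m' : generated m -> generated m' -> generated (sop m m').
Proof.
move=> /generatedP[a [u <-]] /generatedP[b [v <-]]; apply/generatedP.
by exists a, (u ++ b :: v); rewrite map_cat wprod_cat.
Qed.

Definition gen_op (x y : {m : M | generated m}) : {m : M | generated m} :=
  exist _ (sop (val x) (val y)) (generated_sop (valP x) (valP y)).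

Lemma gen_opA : associative gen_op.
Proof. by move=> x y z; apply: val_inj; rewrite /= sopA. Qed.

Lemma gen_nonempty : 0 < #|{: {m : M | generated m}}|.
Proof.
case/card_gt0P: A_nonempty => a _; apply/card_gt0P.
by exists (exist _ (h a) (introT (generatedP _) (ex_intro _ a (ex_intro _ [::] erefl)))).
Qed.

Definition gen_sg : finSemigroup := FinSemigroup gen_opA gen_nonempty.

End Generated.

Section WordSeparation.
Variables (X S : finSemigroup).
Hypothesis X_separates : forall (a b : S) u v,
  (forall g : S -> X, wprod (g a) (map g u) = wprod (g b) (map g v)) ->
  wprod a u = wprod b v.

(* [S] is a quotient of the subsemigroup of [S * X^(X^S)] generated by the
   letters [(s, (g s)_g)]; its second projection is injective by separation. *)
Let M := prod_sg S (fpow_sg X {ffun S -> X}).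
Let letter (s : S) : M := (s, [ffun g : {ffun S -> X} => g s]).
Let Z := gen_sg letter (carrier_nonempty S).

Lemma wprod_letter_fst a u : (wprod (letter a) (map letter u)).1 = wprod a u.
Proof. by rewrite (wprod_hom (@fst_hom _ _)) -map_comp map_id. Qed.

Lemma wprod_letter_snd a u (g : {ffun S -> X}) :
  (wprod (letter a) (map letter u)).2 g = wprod (g a) (map g u).
Proof.
rewrite (wprod_hom (@snd_hom _ _)) (wprod_hom (fpow_app_hom g)) -!map_comp.
by rewrite /= ffunE; congr wprod; apply: eq_map => s; rewrite /= ffunE.
Qed.

Lemma pseudovariety_separated (V : fsclass) : pseudovariety V -> V X -> V S.
Proof.
move=> pvV VX; case: (pvV) => _ _ subV quoV.
have VZ : V Z.
  apply: (subV _ _ (fun z : Z => (val z).2)) => //; last exact: pseudovariety_fpow.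
  move=> z1 z2 e12; apply: val_inj.
  rewrite [val z1]surjective_pairing [val z2]surjective_pairing e12; congr pair.
  case/generatedP: (valP z1) => a [u e1]; case/generatedP: (valP z2) => b [v e2].
  rewrite -e1 -e2 in e12 *; rewrite !wprod_letter_fst; apply: X_separates => g.
  move/ffunP/(_ [ffun s => g s]): e12.
  by rewrite !wprod_letter_snd !ffunE !(eq_map (ffunE _)).
apply: (quoV _ _ (fun z : Z => (val z).1)) VZ => //.
move=> s; have Zs : generated letter (letter s) by apply/generatedP; exists s, [::].
by exists (exist (generated letter) (letter s) Zs).
Qed.

End WordSeparation.

Definition left_normal_band : fsclass := fun S =>
  (forall x : S, sop x x = x) /\ (forall x y z : S, sop (sop x y) z = sop (sop x z) y).

Lemma left_normal_band_pseudovariety : pseudovariety left_normal_band.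
Proof.
split.
- by split=> [[]|[] [] []].
- move=> S T [idS normS] [idT normT]; split.
    by case=> x y; rewrite /= /prod_op /= idS idT.
  by case=> x1 x2 [y1 y2] [z1 z2]; rewrite /= /prod_op /= normS normT.
- move=> S T f homf injf [idT normT]; split.
    by move=> x; apply: injf; rewrite homf idT.
  by move=> x y z; apply: injf; rewrite !homf normT.
- move=> S T f homf surf [idS normS]; split.
    by move=> y; have [x <-] := surf y; rewrite -homf idS.
  move=> x y z; have [x' <-] := surf x; have [y' <-] := surf y; have [z' <-] := surf z.
  by rewrite -!homf normS.
Qed.

Lemma LNB_left_normal_band (T : finSemigroup) : LNB T -> left_normal_band T.
Proof.
apply; first exact: left_normal_band_pseudovariety.
move=> S [[commS idS] | lzS].
  by split=> // x y z; rewrite -!sopA (commS y z).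
by split=> [x | x y z]; rewrite !lzS.
Qed.

Section LeftNormalBand.
Variable T : finSemigroup.
Hypothesis T_left_normal : left_normal_band T.

Lemma wprod_absorb_letter (a z : T) u : z \in a :: u -> sop (wprod a u) z = wprod a u.
Proof.
case: T_left_normal => idT normT.
elim/last_ind: u => [|u y IH]; first by rewrite inE => /eqP ->; apply: idT.
rewrite -rcons_cons mem_rcons inE wprod_rcons => /predU1P[-> | zu].
  by rewrite -sopA idT.
by rewrite normT IH.
Qed.

Lemma wprod_absorb (a : T) u v : {subset v <= a :: u} -> wprod a (u ++ v) = wprod a u.
Proof.
elim: v u => [|y v IH] u vu; first by rewrite cats0.
have yu : y \in a :: u by apply: vu; rewrite mem_head.
rewrite -cat_rcons IH ?wprod_rcons ?wprod_absorb_letter //.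
move=> z zv; rewrite -rcons_cons mem_rcons inE.
by case: eqP => //= _; apply: vu; rewrite inE zv orbT.
Qed.

Lemma wprod_content (a : T) u v : a :: u =i a :: v -> wprod a u = wprod a v.
Proof.
case: T_left_normal => idT normT uv.
have absorb s t : a :: t =i a :: s -> sop (wprod a s) (wprod a t) = wprod a s.
  by move=> ts; rewrite -wprod_cat wprod_absorb // => z; rewrite ts.
have lmul_a s : sop a (wprod a s) = wprod a s by rewrite -wprod_sopl idT.
have := normT a (wprod a u) (wprod a v).
by rewrite !lmul_a absorb // absorb.
Qed.

End LeftNormalBand.

(* In [L2bar], [x < 2] says that [x] is [e] or [f]. *)
Lemma l2bar_sop_bottom (x y : L2bar) : 2 <= y -> sop x y = y.
Proof. by rewrite /= /l2bar_op => ->. Qed.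

Lemma l2bar_sop_top (x y : L2bar) : (sop x y < 2) = (x < 2) && (y < 2).
Proof. by move: x y; do 2!case=> [[|[|[|[|[|?]]]]] ?] //; rewrite /= /l2bar_op /= inordK. Qed.

Lemma l2bar_sop_absorb (x y : L2bar) : x != 4 :> nat -> y < 2 -> sop x y = x.
Proof. by move: x y; do 2!case=> [[|[|[|[|[|?]]]]] ?]. Qed.

Lemma l2bar_Ibar_inj (y z : L2bar) :
  (y < 2) = (z < 2) -> sop (inord 4 : L2bar) y = sop (inord 4 : L2bar) z -> y = z.
Proof.
move: y z; do 2!case=> [[|[|[|[|[|?]]]]] ?] //=; rewrite /l2bar_op /= ?inordK // => _.
all: try by move=> /(congr1 val); rewrite /= ?inordK.
all: by move=> _; apply/val_inj.
Qed.

Lemma l2bar_wprod_top (x : L2bar) s : (wprod x s < 2) = all (fun y : L2bar => y < 2) (x :: s).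
Proof.
elim: s x => [|y s IH] x; first by rewrite /= andbT.
by rewrite wprod_consl IH /= l2bar_sop_top andbA.
Qed.

Lemma l2bar_wprod_absorb (x : L2bar) s :
  x != 4 :> nat -> all (fun y : L2bar => y < 2) s -> wprod x s = x.
Proof.
move=> xI; elim: s => [|y s IH] // /andP[ytop stop].
by rewrite wprod_consl l2bar_sop_absorb // IH.
Qed.

Lemma l2bar_wprod_bottom_suffix (x y : L2bar) s P t :
  x :: s = P ++ y :: t -> 2 <= y -> wprod x s = wprod y t.
Proof.
case: P => [|p P] /= [-> ->] // ybot.
rewrite wprod_cat l2bar_sop_bottom // leqNgt l2bar_wprod_top /=.
by rewrite ltnNge ybot.
Qed.

Section L2barAgreement.
Variable A : eqType.
Implicit Types (a b c d l z : A) (u v P U V : seq A).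

Definition l2bar_agree a b u v :=
  forall g : A -> L2bar, wprod (g a) (map g u) = wprod (g b) (map g v).

Lemma l2bar_agree_sym a b u v : l2bar_agree a b u v -> l2bar_agree b a v u.
Proof. by move=> agr g; rewrite agr. Qed.

Lemma l2bar_wprod_map_top (g : A -> L2bar) a u :
  (wprod (g a) (map g u) < 2) = all (fun y => g y < 2) (a :: u).
Proof. by rewrite l2bar_wprod_top -map_cons all_map. Qed.

Lemma l2bar_wprod_map_suffix (g : A -> L2bar) a u P l U :
  a :: u = P ++ l :: U -> 2 <= g l -> wprod (g a) (map g u) = wprod (g l) (map g U).
Proof. by move=> e; apply: l2bar_wprod_bottom_suffix; rewrite -map_cons e map_cat. Qed.

Lemma l2bar_agree_subset a b u v : l2bar_agree a b u v -> {subset a :: u <= b :: v}.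
Proof.
move=> agr z za; apply/contraT => zb.
pose g y : L2bar := if y == z then inord 2 else inord 0.
have := congr1 (fun x : L2bar => x < 2) (agr g); rewrite /= !l2bar_wprod_map_top.
have -> : all (fun y => g y < 2) (b :: v).
  apply/allP => y yb; rewrite /g; case: eqP => [yz | _]; last by rewrite inordK.
  by rewrite -yz yb in zb.
suff /negbTE -> : ~~ all (fun y => g y < 2) (a :: u) by [].
by apply/allPn; exists z; rewrite // /g eqxx inordK.
Qed.

Lemma l2bar_agree_head a b u v : l2bar_agree a b u v -> a = b.
Proof.
move=> agr; pose g y : L2bar := if y == a then inord 0 else inord 1.
have gtop s : all (fun y : L2bar => y < 2) (map g s).
  by apply/allP => _ /mapP[y _ ->]; rewrite /g; case: eqP; rewrite inordK.
have gI y : g y != 4 :> nat by rewrite /g; case: ifP; rewrite inordK.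
have := agr g; rewrite !l2bar_wprod_absorb // /g eqxx.
by case: eqP => // _ /(congr1 val); rewrite /= !inordK.
Qed.

Lemma l2bar_agree_suffix_subset a b u v P l U P' V :
  l2bar_agree a b u v -> a :: u = P ++ l :: U -> b :: v = P' ++ l :: V ->
  l \notin U -> l \notin V -> {subset U <= V}.
Proof.
move=> agr eu ev lU lV z zU; apply/contraT => zV.
have [U1 [U2 [eU zU2]]] := split_last zU.
pose g y : L2bar := if y == l then inord 2 else if y == z then inord 3 else inord 0.
have gl : g l = inord 2 by rewrite /g eqxx.
have zl : z != l by apply: contraNneq _ lU => <-.
have gz : g z = inord 3 by rewrite /g (negbTE zl) eqxx.
have ge y : y != l -> y != z -> g y = inord 0 by rewrite /g => /negbTE-> /negbTE->.
have etop W : l \notin W -> z \notin W -> all (fun y : L2bar => y < 2) (map g W).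
  move=> lW zW; apply/allP => _ /mapP[y yW ->].
  have yl : y != l by apply: contraNneq _ lW => <-.
  have yz : y != z by apply: contraNneq _ zW => <-.
  by rewrite ge ?inordK.
have gl2 : 2 <= g l by rewrite gl inordK.
have gz2 : 2 <= g z by rewrite gz inordK.
have eU' : l :: U = (l :: U1) ++ z :: U2 by rewrite eU.
have := agr g; rewrite (l2bar_wprod_map_suffix eu gl2) (l2bar_wprod_map_suffix ev gl2).
rewrite (l2bar_wprod_map_suffix eU' gz2) !l2bar_wprod_absorb ?etop ?gl ?gz ?inordK //.
- by move=> /(congr1 val); rewrite /= !inordK.
by apply: contra lU => lU2; rewrite eU mem_cat inE lU2 !orbT.
Qed.

Lemma l2bar_agree_suffix a b u v P l c U P' d V :
  l2bar_agree a b u v -> a :: u = P ++ l :: c :: U -> b :: v = P' ++ l :: d :: V ->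
  l \notin c :: U -> l \notin d :: V -> c :: U =i d :: V -> l2bar_agree c d U V.
Proof.
move=> agr eu ev lU lV UV g.
pose g' y : L2bar := if y == l then inord 4 else g y.
have gl : 2 <= g' l by rewrite /g' eqxx inordK.
have g'E W : l \notin W -> map g' W = map g W.
  move=> lW; apply/eq_in_map => y yW; rewrite /g'; case: eqP => // yl.
  by rewrite -yl yW in lW.
have := agr g'; rewrite (l2bar_wprod_map_suffix eu gl) (l2bar_wprod_map_suffix ev gl).
rewrite !g'E // !map_cons !wprod_cons /g' eqxx => /l2bar_Ibar_inj; apply.
by rewrite !l2bar_wprod_map_top; apply: eq_all_r.
Qed.

End L2barAgreement.

Section FiberRZ.
Variables (S T : finSemigroup) (phi : S -> T) (e : T).
Hypothesis e_in_image : exists x, phi x = e.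

Definition fiber_op (x y : {x : S | phi x == e}) := y.

Lemma fiber_opA : associative fiber_op. Proof. by []. Qed.

Lemma fiber_nonempty : 0 < #|{: {x : S | phi x == e}}|.
Proof. by case: e_in_image => x /eqP xe; apply/card_gt0P; exists (exist _ x xe). Qed.

Definition fiber_rz : finSemigroup := FinSemigroup fiber_opA fiber_nonempty.

Lemma preimage_in_RZP :
  preimage_in RZ phi e <-> (forall a b, phi a = e -> phi b = e -> sop a b = b).
Proof.
split.
  by case=> U [rzU [iota [homi _ imE]]] a b /imE[u <-] /imE[v <-]; rewrite -homi rzU.
move=> rz; exists fiber_rz; split=> //; exists val; split.
- by move=> x y; rewrite /= rz //; apply/eqP; [apply: (valP x) | apply: (valP y)].
- exact: val_inj.
- move=> x; split=> [/eqP xe | [y <-]]; first by exists (exist _ x xe).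
  exact/eqP/(valP y).
Qed.

End FiberRZ.

Section RZOverLeftNormalBand.
Variables (S T : finSemigroup) (phi : S -> T).
Hypotheses (T_left_normal : left_normal_band T) (phi_hom : is_hom phi).
Hypothesis phi_fibers : forall e : T,
  idempotent_el e -> (exists x, phi x = e) -> preimage_in RZ phi e.

Lemma sop_fiber (a b : S) : phi a = phi b -> sop a b = b.
Proof.
have b_in_image : exists x, phi x = phi b by exists b.
have idem : idempotent_el (phi b) by case: T_left_normal => idT _; apply: idT.
by move/(preimage_in_RZP b_in_image): (phi_fibers idem b_in_image) => rz ab; apply: rz.
Qed.

Lemma sop_idem (x : S) : sop x x = x.
Proof. exact: sop_fiber. Qed.

Lemma wprod_same_content (a : S) u v :
  a :: u =i a :: v -> sop (wprod a u) (wprod a v) = wprod a v.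
Proof.
move=> uv; apply: sop_fiber; rewrite !(wprod_hom phi_hom).
by apply: wprod_content => //; rewrite -!map_cons; apply: eq_mem_map.
Qed.

Lemma wprod_full_suffix (a l : S) u P U :
  a :: u = P ++ l :: U -> {subset P <= l :: U} ->
  sop (wprod a u) (wprod l U) = wprod a u /\ sop (wprod l U) (wprod a u) = wprod l U.
Proof.
case: P => [|p P] /= [-> ->] PU; first by rewrite sop_idem.
rewrite wprod_cat -sopA sop_idem; split=> //.
have := @wprod_same_content l (U ++ p :: P ++ l :: U) U.
rewrite !wprod_cat -!sopA sop_idem; apply=> z.
rewrite -cat_cons mem_cat; case: (boolP (z \in l :: U)) => //= zlU.
by rewrite -cat_cons mem_cat (negbTE zlU) orbF; apply/negbTE; apply: contra zlU; apply: PU.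
Qed.

Lemma wprod_eq_full_suffix (a l : S) u v P U P' V :
  a :: u = P ++ l :: U -> a :: v = P' ++ l :: V ->
  {subset P <= l :: U} -> {subset P' <= l :: V} ->
  a :: u =i a :: v -> wprod l U = wprod l V -> wprod a u = wprod a v.
Proof.
move=> eu ev PU P'V uv UV.
have [xw _] := wprod_full_suffix eu PU; have [_ wy] := wprod_full_suffix ev P'V.
rewrite UV in xw.
by rewrite -(wprod_same_content uv) -{1}xw -wy sopA xw.
Qed.

Lemma wprod_eq_of_l2bar_agree (a b : S) u v : l2bar_agree a b u v -> wprod a u = wprod b v.
Proof.
have [n] := ubnP (size u); elim: n => // n IH in a b u v *; rewrite ltnS => un agr.
have ab := l2bar_agree_head agr; subst b.
have uv : a :: u =i a :: v.
  move=> z; apply/idP/idP; first exact: l2bar_agree_subset agr z.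
  exact: l2bar_agree_subset (l2bar_agree_sym agr) z.
have [P [l [U [eu lU uU]]]] := split_full_suffix a u.
have lv : l \in a :: v by rewrite -uv eu mem_cat mem_head orbT.
have [P' [V [ev lV]]] := split_last lv.
have UV : U =i V.
  move=> z; apply/idP/idP; first exact: l2bar_agree_suffix_subset agr eu ev lU lV z.
  exact: l2bar_agree_suffix_subset (l2bar_agree_sym agr) ev eu lV lU z.
apply: (wprod_eq_full_suffix eu ev) => //.
- by move=> z zP; apply: uU; rewrite eu mem_cat zP.
- move=> z zP'; have : z \in l :: U by apply: uU; rewrite uv ev mem_cat zP'.
  by rewrite !inE UV.
case: U V UV eu ev lU lV {uU} => [|c U] [|d V] UV eu ev lU lV //.
- by have := UV d; rewrite inE eqxx.
- by have := UV c; rewrite inE eqxx.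
rewrite !wprod_cons (IH c d U V) //; last exact: l2bar_agree_suffix agr eu ev lU lV UV.
apply: leq_trans un; have := congr1 size eu; rewrite size_cat /= addnS => -[->].
exact: leq_addl.
Qed.

Lemma RZ_over_left_normal_band_in_pv (V : fsclass) : pseudovariety V -> V L2bar -> V S.
Proof. by apply: pseudovariety_separated; exact: wprod_eq_of_l2bar_agree. Qed.

End RZOverLeftNormalBand.

Definition left_zero_op (x y : bool) : bool := x.
Lemma left_zero_opA : associative left_zero_op. Proof. by []. Qed.
Lemma bool_nonempty : 0 < #|{: bool}|. Proof. by rewrite card_bool. Qed.
Definition L2 : finSemigroup := FinSemigroup left_zero_opA bool_nonempty.

Definition Sl2 : finSemigroup := FinSemigroup andbA bool_nonempty.

(* [L2] with a zero adjoined, the zero being [None]. *)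
Definition L2zero_op (x y : option bool) : option bool :=
  if y is Some _ then x else None.
Lemma L2zero_opA : associative L2zero_op. Proof. by do 3!case=> [[]|]. Qed.
Lemma option_bool_nonempty : 0 < #|{: option bool}|. Proof. by rewrite card_option. Qed.
Definition L2zero : finSemigroup := FinSemigroup L2zero_opA option_bool_nonempty.

Lemma L2zero_LNB : LNB L2zero.
Proof.
move=> V pvV CV; case: (pvV) => _ prodV _ quoV.
pose q (x : prod_sg L2 Sl2) : L2zero := if x.2 then Some x.1 else None.
apply: (quoV (prod_sg L2 Sl2) _ q).
- by do 2!case=> ? [].
- by case=> [b|]; [exists (b, true) | exists (true, false)].
apply: prodV; apply: CV; first by right.
by left; split=> [[] [] | []].
Qed.

Definition l2bar_to_L2zero (x : L2bar) : L2zero := if x < 2 then Some (x == 0 :> nat) else None.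

Lemma l2bar_to_L2zero_hom : is_hom l2bar_to_L2zero.
Proof.
by do 2!case=> [[|[|[|[|[|?]]]]] ?] //; rewrite /l2bar_to_L2zero /= /l2bar_op /= inordK.
Qed.

Lemma l2bar_to_L2zero_fibers (a b : L2bar) :
  l2bar_to_L2zero a = l2bar_to_L2zero b -> sop a b = b.
Proof.
move: a b; do 2!case=> [[|[|[|[|[|?]]]]] ?] //; rewrite /l2bar_to_L2zero /= ?inordK //.
all: by move=> _; apply/val_inj; rewrite /= /l2bar_op /= ?inordK.
Qed.

Lemma L2bar_malcev : malcev RZ LNB L2bar.
Proof.
apply: pv_gen_sub; exists L2zero; split; first exact: L2zero_LNB.
exists l2bar_to_L2zero; split=> [|e _ e_in_image]; first exact: l2bar_to_L2zero_hom.
apply/(preimage_in_RZP e_in_image) => a b <- ab.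
exact/l2bar_to_L2zero_fibers/esym.
Qed.

Theorem proposition4p12 :
  forall S : finSemigroup, malcev RZ LNB S <-> pv_gen1 L2bar S.
Proof.
move=> S; split; apply.
- exact: pv_gen_pseudovariety.
- move=> S' [T [LNB_T [phi [phi_hom phi_fibers]]]] V pvV L2bar_V.
  exact: RZ_over_left_normal_band_in_pv (LNB_left_normal_band LNB_T) phi_hom phi_fibers
    V pvV (L2bar_V L2bar erefl).
- exact: pv_gen_pseudovariety.
- by move=> _ ->; exact: L2bar_malcev.
Qed.
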